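(* Let $\tau>0$, $u_n\in\mathcal V_{[0,1]}$ with $M:=\mathcal M(u_n)\in(0,\mathcal M(\mathbf 1))$. Let $\alpha_1<\dots<\alpha_K$ be the distinct values of $e^{-\tau\Delta}u_n$, $a_\alpha:=\sum_{i:(e^{-\tau\Delta}u_n)_i=\alpha}d_i^r$, and $k\in\{1,\dots,K\}$ the unique index with $\sum_{l=k+1}^K a_{\alpha_l} < M \leq \sum_{l=k}^K a_{\alpha_l}$. For $0\le\lambda<1$ let $u^\lambda_{n+1}$ be the unique minimiser of $(1-\lambda)\|u\|^2_{\mathcal V}-2\langle u,e^{-\tau\Delta}u_n\rangle_{\mathcal V}$ over $\{u\in\mathcal V_{[0,1]}:\mathcal M(u)=M\}$. Then there is $\delta>0$, depending only on $e^{-\tau\Delta}u_n$, such that for every $\lambda\in(1-\delta,1)$ and all $i\in V$ \[ (u^\lambda _{n+1})_i=\begin{cases} 0, &\text{if } (e^{-\tau\Delta}u_n)_i< \alpha_{k}, \\ a_{\alpha_k}^{-1}\left(M - \sum_{l=k+1}^K a_{\alpha_l}\right) , &\text{if } (e^{-\tau\Delta}u_n)_i =\alpha_k,\\ 1, &\text{if } (e^{-\tau\Delta}u_n)_i > \alpha_{k}, \end{cases} \] and hence $u^\lambda_{n+1}$ converges as $\lambda\uparrow1$ to the function given by the right-hand side.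
   Context: $G=(V,E)$ is a finite, simple, connected, undirected graph with weights $\omega_{ij}=\omega_{ji}>0$ for $ij\in E$, $\omega_{ij}=0$ otherwise; $d_i=\sum_j\omega_{ij}$, $r\in[0,1]$ fixed. $\mathcal V$ = functions $V\to\mathbb R$ with $\langle u,v\rangle_{\mathcal V}=\sum_i u_iv_id_i^r$ and norm $\|\cdot\|_{\mathcal V}$; $\mathcal V_{[0,1]}$ = functions $V\to[0,1]$. $(\Delta u)_i=d_i^{-r}\sum_j\omega_{ij}(u_i-u_j)$, $e^{-\tau\Delta}$ its matrix exponential. $\mathbf 1$ all-ones; $\mathcal M(u)=\langle u,\mathbf 1\rangle_{\mathcal V}$. *)

From HB Require Import structures.
From mathcomp Require Import all_boot all_order all_algebra.
From mathcomp Require Import all_classical all_reals all_analysis.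
Set Implicit Arguments. Unset Strict Implicit. Unset Printing Implicit Defensive.
Import Order.TTheory GRing.Theory Num.Theory.
Local Open Scope ring_scope.

Section GraphDefs.
Variables (R : realType) (n : nat).
Implicit Types (w : 'I_n -> 'I_n -> R) (u v : 'I_n -> R).

Definition weighted_graph w : Prop :=
  (forall i j, w i j = w j i) /\ (forall i j, 0 <= w i j) /\ (forall i, w i i = 0) /\
  (forall i j, connect (fun a b => 0 < w a b) i j).

Definition deg w (i : 'I_n) : R := \sum_j w i j.

Definition dr w (r : R) (i : 'I_n) : R := powR (deg w i) r.

Definition inner w r u v : R := \sum_i u i * v i * dr w r i.
Definition sqnorm w r u : R := inner w r u u.
Definition mass w r u : R := inner w r u (fun _ => 1).

(* matrix of the graph Laplacian: (Delta u)_i = d_i^{-r} sum_j w_ij (u_i - u_j) *)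
Definition lapmx w (r : R) : 'M[R]_n :=
  \matrix_(i, j) ((dr w r i)^-1 * ((i == j)%:R * deg w i - w i j)).

Definition expmx (A : 'M[R]_n) : 'M[R]_n :=
  \matrix_(i, j) limn (fun N : nat => \sum_(k < N) (A ^+ k) i j / (k`!)%:R).

Definition heat w r (tau : R) u : 'I_n -> R :=
  fun i => \sum_j expmx (- tau *: lapmx w r) i j * u j.

Definition in01 u : Prop := forall i, 0 <= u i <= 1.

Definition is_minimiser w r (lam M : R) v u : Prop :=
  in01 u /\ mass w r u = M /\
  forall u', in01 u' -> mass w r u' = M ->
    (1 - lam) * sqnorm w r u - 2 * inner w r u v
      <= (1 - lam) * sqnorm w r u' - 2 * inner w r u' v.

(* the limiting profile, with threshold value alpha = alpha_k *)
Definition thresh_profile w r (M alpha : R) v : 'I_n -> R :=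
  fun i => if v i < alpha then 0
           else if v i == alpha then
             (\sum_(j | v j == alpha) dr w r j)^-1 *
               (M - \sum_(j | alpha < v j) dr w r j)
           else 1.
End GraphDefs.

(* With eps := 1 - lam the energy is eps ||u||^2 - 2 <u, v>.  Once eps is below the smallest
   gap between distinct values of v, the threshold profile p satisfies the variational
   inequality (x - p_i) (eps p_i - v_i + mu) >= 0 for every x in [0, 1], with the Lagrange
   multiplier mu = alpha_k - eps c (c the value of p on the level set {v = alpha_k}).  Hence
   for every admissible u the energy of u exceeds that of p by at least eps ||u - p||^2, so p
   is the only minimiser, and it does not depend on lam. *)
From HB Require Import structures.
From mathcomp Require Import all_boot all_order all_algebra.
From mathcomp Require Import all_classical all_reals all_analysis.
From mathcomp Require Import ring lra.
Set Implicit Arguments. Unset Strict Implicit. Unset Printing Implicit Defensive.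
Import Order.TTheory GRing.Theory Num.Theory.
Import numFieldNormedType.Exports.
Local Open Scope ring_scope.
Local Open Scope classical_set_scope.

Lemma finite_values_gap (R : realDomainType) (T : finType) (f : T -> R) :
  exists2 delta : R, 0 < delta & forall i j, f i != f j -> delta <= `|f i - f j|.
Proof.
pose gap ij : R := if f ij.1 == f ij.2 then 1 else `|f ij.1 - f ij.2|.
exists (\big[Order.min/1]_(ij : T * T) gap ij).
  apply: (big_ind (fun x => 0 < x)) => // [x y x_gt0 y_gt0|ij _].
    by rewrite lt_min x_gt0 y_gt0.
  by rewrite /gap; case: eqP => // /eqP; rewrite normr_gt0 subr_eq0.
move=> i j fij; apply: le_trans (bigmin_le _ (i, j) _) _.
by rewrite /gap /= (negbTE fij).
Qed.

Section GraphWeights.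
Variables (R : realType) (n : nat) (w : 'I_n -> 'I_n -> R) (r : R).
Hypothesis w_graph : weighted_graph w.

Lemma deg_eq0_vertex_unique i : deg w i = 0 -> forall j, j = i.
Proof.
have [_ [w_ge0 [_ w_connect]]] := w_graph.
move=> /eqP; rewrite psumr_eq0 => [/allP wi0 j|k _]; last exact: w_ge0.
have /connectP[[|k p] /= path_ij ->] // := w_connect i j.
by move: path_ij => /andP[]; rewrite (eqP (wi0 k (mem_index_enum k))) ltxx.
Qed.

Lemma dr_gt0 u : 0 < mass w r u -> forall i, 0 < dr w r i.
Proof.
move=> mass_gt0 i; rewrite lt_neqAle powR_ge0 andbT eq_sym; apply/negP => /eqP dri0.
have all_i := deg_eq0_vertex_unique (powR_eq0_eq0 dri0).
move: mass_gt0; rewrite /mass /inner big1 ?ltxx // => j _.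
by rewrite (all_i j) dri0 mulr0.
Qed.

End GraphWeights.

Section ThresholdProfile.
Variables (R : realType) (n : nat) (w : 'I_n -> 'I_n -> R) (r : R).
Hypothesis dr_gt0 : forall i, 0 < dr w r i.

Definition energy (eps : R) (v u : 'I_n -> R) : R :=
  eps * sqnorm w r u - 2 * inner w r u v.

Lemma sqnorm_term_ge0 u i : 0 <= u i * u i * dr w r i.
Proof. by rewrite -expr2 mulr_ge0 ?sqr_ge0 // ltW. Qed.

Lemma sqnorm_ge0 u : 0 <= sqnorm w r u.
Proof. by apply: sumr_ge0 => i _; apply: sqnorm_term_ge0. Qed.

Lemma sqnorm_eq0 u : sqnorm w r u = 0 -> forall i, u i = 0.
Proof.
move=> /eqP; rewrite psumr_eq0 => [/allP u0 i|i _]; last exact: sqnorm_term_ge0.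
move: (u0 i (mem_index_enum i)); rewrite mulf_eq0 (gt_eqF (dr_gt0 i)) orbF.
by rewrite -expr2 sqrf_eq0 => /eqP.
Qed.

Lemma energyB eps mu v u p :
  energy eps v u - energy eps v p =
  eps * sqnorm w r (fun i => u i - p i)
  + 2 * \sum_i (u i - p i) * (eps * p i - v i + mu) * dr w r i
  - 2 * mu * (mass w r u - mass w r p).
Proof.
rewrite /energy /sqnorm /mass /inner !mulr_sumr -!sumrB mulr_sumr -big_split /= -sumrB.
by apply: eq_bigr => i _; ring.
Qed.

Variables (v : 'I_n -> R) (M alpha : R).
Hypothesis mass_between :
  \sum_(j | alpha < v j) dr w r j < M <= \sum_(j | alpha <= v j) dr w r j.

Let above := \sum_(j | alpha < v j) dr w r j.
Let level := \sum_(j | v j == alpha) dr w r j.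
Let c := level^-1 * (M - above).
Let p := thresh_profile w r M alpha v.

Lemma thresh_profileE i : p i = if v i < alpha then 0 else if v i == alpha then c else 1.
Proof. by []. Qed.

Lemma sum_ge_level : \sum_(j | alpha <= v j) dr w r j = level + above.
Proof.
rewrite (bigID (fun j => v j == alpha)) /=; congr (_ + _); apply: eq_bigl => j.
  by case: eqP => [->|]; rewrite ?lexx ?andbF.
by rewrite lt_neqAle andbC eq_sym.
Qed.

Lemma level_gt0 : 0 < level.
Proof.
have [above_lt_M] := andP mass_between; rewrite sum_ge_level -/above => M_le.
by rewrite -(ltrD2r above) add0r (lt_le_trans above_lt_M).
Qed.

Lemma thresh_level_gt0 : 0 < c.
Proof. by rewrite mulr_gt0 ?invr_gt0 ?level_gt0 // subr_gt0 (andP mass_between).1. Qed.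

Lemma thresh_level_le1 : c <= 1.
Proof.
have [_] := andP mass_between; rewrite sum_ge_level -/above => M_le.
by rewrite /c mulrC ler_pdivrMr ?level_gt0 // mul1r lerBlDr.
Qed.

Lemma thresh_profile_in01 : in01 p.
Proof.
move=> i; rewrite thresh_profileE; case: (v i < alpha); first by rewrite lexx ler01.
by case: (v i == alpha); rewrite ?(ltW thresh_level_gt0) ?thresh_level_le1 ?ler01 ?lexx.
Qed.

Lemma mass_thresh_profile : mass w r p = M.
Proof.
rewrite /mass /inner.
transitivity (\sum_i (c * (if v i == alpha then dr w r i else 0)
                     + (if alpha < v i then dr w r i else 0))).
  apply: eq_bigr => i _; rewrite thresh_profileE mulr1.
  by case: ltgtP; rewrite ?mulr0 ?addr0 ?mul0r ?add0r ?mul1r.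
rewrite big_split /= -mulr_sumr -!big_mkcond /= -/level -/above.
by rewrite /c mulrAC mulVf ?gt_eqF ?level_gt0 // mul1r subrK.
Qed.

Variable eps : R.
Hypotheses (eps_gt0 : 0 < eps) (eps_le_gap : forall i, v i != alpha -> eps <= `|v i - alpha|).

Lemma thresh_profile_variational x i :
  0 <= x <= 1 -> 0 <= (x - p i) * (eps * p i - v i + (alpha - eps * c)).
Proof.
move=> /andP[x_ge0 x_le1]; have c_gt0 := thresh_level_gt0; have c_le1 := thresh_level_le1.
rewrite thresh_profileE; case: ltgtP => vi.
- have := eps_le_gap (negbT (lt_eqF vi)); rewrite ltr0_norm ?subr_lt0 // => gap_le.
  have : eps * c <= eps by exact: ler_piMr (ltW eps_gt0) c_le1.
  by rewrite mulr0 subr0 => ?; apply: mulr_ge0; lra.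
- have := eps_le_gap (negbT (gt_eqF vi)); rewrite gtr0_norm ?subr_gt0 // => gap_le.
  have : eps * (1 - c) <= eps by apply: ler_piMr (ltW eps_gt0) _; lra.
  by move=> ?; apply: mulr_le0; lra.
- by rewrite vi addrC addrA subrK addrC subrr mulr0.
Qed.

Lemma thresh_profile_unique_minimiser u :
  in01 u -> mass w r u = M ->
  (forall u', in01 u' -> mass w r u' = M -> energy eps v u <= energy eps v u') ->
  forall i, u i = p i.
Proof.
move=> u01 massu u_min i.
have := u_min p thresh_profile_in01 mass_thresh_profile.
rewrite -subr_le0 (energyB _ (alpha - eps * c)) massu mass_thresh_profile subrr mulr0 subr0.
have variational_ge0 :
    0 <= \sum_j (u j - p j) * (eps * p j - v j + (alpha - eps * c)) * dr w r j.
  apply: sumr_ge0 => j _.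
  by apply: mulr_ge0; [exact: thresh_profile_variational | exact: ltW].
have dist_ge0 := sqnorm_ge0 (fun j => u j - p j).
move=> energy_le; apply/eqP; rewrite -subr_eq0; apply/eqP.
apply: (sqnorm_eq0 (u := fun j => u j - p j)); apply/eqP; rewrite eq_le dist_ge0 andbT.
by rewrite -(pmulr_rle0 _ eps_gt0); lra.
Qed.

End ThresholdProfile.

Theorem theorem31 (R : realType) (n : nat) (w : 'I_n -> 'I_n -> R) (r tau : R)
  (un : 'I_n -> R) :
  weighted_graph w -> 0 <= r <= 1 -> 0 < tau -> in01 un ->
  0 < mass w r un < mass w r (fun _ => 1) ->
  let M := mass w r un in
  let v := heat w r tau un in
  exists delta : R, 0 < delta /\
    (forall lam : R, 0 <= lam -> 1 - delta < lam -> lam < 1 ->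
      forall alpha : R, (exists i, v i = alpha) ->
        \sum_(j | alpha < v j) dr w r j < M <= \sum_(j | alpha <= v j) dr w r j ->
      forall u, is_minimiser w r lam M v u ->
      forall i, u i = thresh_profile w r M alpha v i) /\
    (forall ul : R -> 'I_n -> R,
      (forall lam : R, 0 <= lam < 1 -> is_minimiser w r lam M v (ul lam)) ->
      forall alpha : R, (exists i, v i = alpha) ->
        \sum_(j | alpha < v j) dr w r j < M <= \sum_(j | alpha <= v j) dr w r j ->
      forall i, (fun lam => ul lam i) @ 1^'- --> thresh_profile w r M alpha v i).
Proof.
move=> w_graph _ _ _ /andP[mass_gt0 _] M v.
have drw_gt0 := dr_gt0 w_graph mass_gt0.
have [delta delta_gt0 v_gap] := finite_values_gap v.
have profile_near1 lam : 1 - delta < lam -> lam < 1 ->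
    forall alpha, (exists i, v i = alpha) ->
    \sum_(j | alpha < v j) dr w r j < M <= \sum_(j | alpha <= v j) dr w r j ->
    forall u, is_minimiser w r lam M v u -> forall i, u i = thresh_profile w r M alpha v i.
  move=> lam_gt lam_lt1 _ [i0 <-] mass_between u [u01 [massu u_min]].
  have eps_gt0 : 0 < 1 - lam by rewrite subr_gt0.
  have eps_le_gap i : v i != v i0 -> 1 - lam <= `|v i - v i0|.
    by move=> vi; apply: le_trans (v_gap i i0 vi); apply: ltW; lra.
  exact: (thresh_profile_unique_minimiser drw_gt0 mass_between eps_gt0 eps_le_gap u01).
exists delta; split=> //; split=> [lam _|ul ul_min alpha v_alpha mass_between i].
  exact: profile_near1.
apply: cvg_near_cst; near=> lam.
apply: (profile_near1 lam _ _ _ v_alpha mass_between); last apply: ul_min.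
- by near: lam; apply: nbhs_left_gt; lra.
- by near: lam; exact: nbhs_left_lt.
- apply/andP; split; last by near: lam; exact: nbhs_left_lt.
  by near: lam; apply: nbhs_left_ge; exact: ltr01.
Unshelve. all: by end_near.
Qed.
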